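(* Let $g:\mathbb Z\to[0,\infty)$ and $\mu\in\mathbb R$, and define $G=\sum_{k\in\mathbb Z}g(k)$ and $J=\sum_{k\in\mathbb Z}(k-\mu)^2g(k)$. If $0<G<\infty$ and $0<J<\infty$, then $$\sup_{k\in\mathbb Z}g(k)\ge\frac{3G^{3/2}}{16\sqrt J+4\sqrt G}.$$ *)

From HB Require Import structures.
From mathcomp Require Import all_boot all_order all_algebra.
From mathcomp Require Import all_classical all_reals all_analysis.

From HB Require Import structures.
From mathcomp Require Import all_boot all_order all_algebra.
From mathcomp Require Import all_classical all_reals all_analysis.
From mathcomp Require Import zify ring lra.
Import Order.TTheory GRing.Theory Num.Theory.
Local Open Scope classical_set_scope.
Local Open Scope ring_scope.

(* Let M bound g.  For t > 0, each g k is at most M when |k - mu| < t and at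
   most (k - mu)^2 g k / t^2 otherwise; since at most 2t + 1 integers lie
   within t of mu, summing gives G <= M (2t + 1) + J / t^2.  The choice
   t = 2 sqrt(J / G) makes the last term G / 4, and rearranging gives the
   bound. *)

Lemma sum_le_cover {R : numDomainType} {T : eqType} (s B : seq T)
    (f h : T -> R) (M : R) :
  uniq s -> 0 <= M ->
  (forall x, f x <= (if x \in B then M else 0) + h x) ->
  \sum_(x <- s) f x <= M * (size B)%:R + \sum_(x <- s) h x.
Proof.
move=> s_uniq M_ge0 f_le.
apply: le_trans (ler_sum _ (fun x _ => f_le x)) _.
rewrite big_split /= lerD2r -big_mkcond /= big_const_seq iter_addr_0.
rewrite -[M *+ _]mulr_natr ler_wpM2l // ler_nat -size_filter.
rewrite uniq_leq_size ?filter_uniq // => x.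
by rewrite mem_filter => /andP[].
Qed.

Lemma esum_le_cover {R : realType} {T : choiceType} (B : seq T)
    (f h : T -> R) (M c : R) :
  0 <= M -> 0 <= c ->
  (forall x, f x <= (if x \in B then M else 0) + c * h x) ->
  (\esum_(x in [set: T]) (f x)%:E
    <= (M * (size B)%:R)%:E + c%:E * \esum_(x in [set: T]) (h x)%:E)%E.
Proof.
move=> M_ge0 c_ge0 f_le; apply: ge_ereal_sup => _ [X [X_fin _] <-].
rewrite fsbig_finite // sumEFin.
apply: le_trans (_ : _ <= (M * (size B)%:R + c * \sum_(x <- _) h x)%:E)%E _.
  by rewrite lee_fin mulr_sumr; apply: sum_le_cover (finmap.fset_uniq _) _ _.
rewrite EFinD !EFinM leeD2l // lee_wpmul2l ?lee_fin //.
by rewrite -sumEFin -fsbig_finite //; apply: ereal_sup_ubound; exists X.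
Qed.

Section IntWindow.
Context {R : archiRealFieldType}.
Implicit Types (c t M y : R) (k : int).

Definition int_window c t : seq int :=
  [seq Num.floor (c - t) + 1 + j%:Z | j <- iota 0 (`|Num.floor (2 * t)|%N).+1].

Lemma size_int_window c t : 0 <= t -> (size (int_window c t))%:R <= 2 * t + 1.
Proof.
move=> t_ge0; rewrite size_map size_iota -addn1 natrD lerD2r natr_absz.
have floor_ge0 : 0 <= Num.floor (2 * t) by rewrite floor_ge0 mulr_ge0.
by rewrite ger0_norm // floor_le.
Qed.

Lemma mem_int_window c t k : `|k%:~R - c| < t -> k \in int_window c t.
Proof.
rewrite ltr_norml => /andP[lt_k lt_k'].
have := floor_le (c - t); have := floorD1_gt (c - t).
set a := Num.floor (c - t) => lt_a le_a.
have a_lt_k : a < k by rewrite -(ltr_int R); lra.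
have k_le : k - a - 1 <= Num.floor (2 * t).
  by rewrite floor_ge_int !intrD !intrN; lra.
apply/mapP; exists `|(k - a - 1)%R|%N; last by lia.
by rewrite mem_iota; lia.
Qed.

Lemma le_window_chebyshev c t M y k :
  0 < t -> 0 <= y -> y <= M ->
  y <= (if k \in int_window c t then M else 0)
       + t ^- 2 * ((k%:~R - c) ^+ 2 * y).
Proof.
move=> t_gt0 y_ge0 y_le; case: ifP => [_ | k_out].
  apply: le_trans y_le _; rewrite lerDl.
  apply: mulr_ge0 (mulr_ge0 (sqr_ge0 _) y_ge0).
  by rewrite invr_ge0 exprn_ge0 // ltW.
have t_le : t <= `|k%:~R - c|.
  by rewrite leNgt; apply: contraFN k_out; apply: mem_int_window.
have t2_le : t ^+ 2 <= (k%:~R - c) ^+ 2.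
  rewrite -[X in _ <= X]real_normK ?num_real //.
  by rewrite ler_sqr ?nnegrE // ltW.
by rewrite add0r mulrA ler_peMl // mulrC ler_pdivlMr ?exprn_gt0 // mul1r.
Qed.
End IntWindow.

Lemma upper_bound_ge_mass_variance (R : realType) (g : int -> R)
    (mu G J M : R) :
  (forall k, 0 <= g k) ->
  (\esum_(k in [set: int]) (g k)%:E)%E = G%:E ->
  (\esum_(k in [set: int]) (((k%:~R - mu) ^+ 2 * g k)%:E))%E = J%:E ->
  0 < G -> 0 < J -> (forall k, g k <= M) ->
  3 * G * Num.sqrt G / (16 * Num.sqrt J + 4 * Num.sqrt G) <= M.
Proof.
move=> g_ge0 defG defJ G_gt0 J_gt0 g_le.
have M_ge0 : 0 <= M := le_trans (g_ge0 0) (g_le 0).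
set r := Num.sqrt J; set q := Num.sqrt G.
have r_gt0 : 0 < r by rewrite sqrtr_gt0.
have q_gt0 : 0 < q by rewrite sqrtr_gt0.
have rr : r ^+ 2 = J by rewrite sqr_sqrtr // ltW.
have qq : q ^+ 2 = G by rewrite sqr_sqrtr // ltW.
set t := 2 * r / q.
have t_gt0 : 0 < t by rewrite divr_gt0 // mulr_gt0.
have t2_ge0 : 0 <= t ^- 2 by rewrite invr_ge0 exprn_ge0 // ltW.
have g_le_window k :=
  le_window_chebyshev mu t M (g k) k t_gt0 (g_ge0 k) (g_le k).
have := esum_le_cover (int_window mu t) g (fun k => (k%:~R - mu) ^+ 2 * g k)
  _ _ M_ge0 t2_ge0 g_le_window.
rewrite defG defJ -EFinM -EFinD lee_fin => G_le.
have q_neq0 : q != 0 by rewrite lt0r_neq0.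
have r_neq0 : r != 0 by rewrite lt0r_neq0.
have Jt_eq : t ^- 2 * J = G / 4.
  by rewrite /t -rr -qq; field; rewrite q_neq0 r_neq0.
have Mn_le := ler_wpM2l M_ge0 (size_int_window mu t (ltW t_gt0)).
have G3_le : 3 * G <= 4 * M * (2 * t + 1) by nra.
rewrite ler_pdivrMr ?addr_gt0 ?mulr_gt0 //.
have -> : M * (16 * r + 4 * q) = 4 * M * (2 * t + 1) * q.
  by rewrite /t; field.
by rewrite ler_pM2r.
Qed.

Theorem lemma7 (R : realType) (g : int -> R) (mu G J : R)
  (g_ge0 : forall k, 0 <= g k)
  (defG : (\esum_(k in [set: int]) (g k)%:E)%E = G%:E)
  (defJ : (\esum_(k in [set: int]) (((k%:~R - mu) ^+ 2 * g k)%:E))%E = J%:E)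
  (G_gt0 : 0 < G) (J_gt0 : 0 < J) :
  (((3 * G * Num.sqrt G) / (16 * Num.sqrt J + 4 * Num.sqrt G))%:E
    <= ereal_sup (range (fun k => (g k)%:E)))%E.
Proof.
have g_le_sup k : ((g k)%:E <= ereal_sup (range (fun k => (g k)%:E)))%E.
  by apply: ereal_sup_ubound; exists k.
move: g_le_sup (g_le_sup 0).
case: (ereal_sup _) => [M | | ] g_le_sup; rewrite ?leey ?leeNy_eq // => _.
rewrite lee_fin.
apply: upper_bound_ge_mass_variance g_ge0 defG defJ G_gt0 J_gt0 _.
by move=> k; rewrite -lee_fin.
Qed.
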